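(* Let $\alpha\geq2$ be an ordinal. If $\mathfrak A\in TA_\alpha$ is atomic (its Boolean reduct is atomic), then $\mathfrak A$ is completely representable: there are a permutable set $V$ (for infinite $\alpha$, a permutable subset of a weak space) and an injective homomorphism $f:\mathfrak A\to\wp(V)$ such that $f(\prod Y)=\bigcap_{y\in Y}f(y)$ for every $Y\subseteq A$ for which $\prod Y$ exists; moreover $\bigcup_{x\in\mathrm{At}\mathfrak A}f(x)=V$.
   Context: $TA_\alpha=\mathbf{Mod}(\Sigma_\alpha)$, where $\Sigma_\alpha$ (signature $\wedge,-,s_{ij}$ for $i\neq j<\alpha$) consists of the Boolean algebra axioms, the equations saying each $s_{ij}$ is a Boolean endomorphism, and $t_1(x)=t_2(x)$ for all words $t_1,t_2$ in the $s_{ij}$ whose associated compositions of transpositions $[i,j]$ coincide. A weak space is ${}^\alpha U^{(p)}=\{s\in{}^\alpha U:|\{i:s_i\neq p_i\}|<\omega\}$ for a set $U$ and $p\in{}^\alpha U$. A set $V$ of sequences is permutable if $s\circ[i,j]\in V$ for all $s\in V$, $i\neq j<\alpha$. $\wp(V)=\langle\mathcal P(V);\cap,-,S_{ij}\rangle$ with complement relative to $V$ and $S_{ij}(Y)=\{q\in V:q\circ[i,j]\in Y\}$. $\mathrm{At}\mathfrak A$ is the set of atoms. *)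

From mathcomp Require Import all_boot.
Set Implicit Arguments. Unset Strict Implicit. Unset Printing Implicit Defensive.

Definition transp (I : eqType) (i j : I) (k : I) : I :=
  if k == i then j else if k == j then i else k.

(* A word in the s_ij, written as a list of index pairs:
   [:: (i1,j1); ...; (in,jn)] stands for s_{i1 j1} (... (s_{in jn} x)). *)
Definition word_ok (I : eqType) (w : seq (I * I)) : Prop :=
  forall p, p \in w -> p.1 <> p.2.

Definition eval_word (I : eqType) (A : Type) (s : I -> I -> A -> A)
  (w : seq (I * I)) (x : A) : A :=
  foldr (fun p y => s p.1 p.2 y) x w.

Definition word_perm (I : eqType) (w : seq (I * I)) (k : I) : I :=
  foldr (fun p y => transp p.1 p.2 y) k w.

Definition bjoin (A : Type) (meet : A -> A -> A) (compl : A -> A) (x y : A) : A :=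
  compl (meet (compl x) (compl y)).

Record is_TA (I : eqType) (A : Type) (meet : A -> A -> A) (compl : A -> A)
    (s : I -> I -> A -> A) : Prop := {
  ta_meetC : forall x y, meet x y = meet y x;
  ta_meetA : forall x y z, meet x (meet y z) = meet (meet x y) z;
  ta_joinC : forall x y, bjoin meet compl x y = bjoin meet compl y x;
  ta_joinA : forall x y z, bjoin meet compl x (bjoin meet compl y z)
                          = bjoin meet compl (bjoin meet compl x y) z;
  ta_absorb1 : forall x y, meet x (bjoin meet compl x y) = x;
  ta_absorb2 : forall x y, bjoin meet compl x (meet x y) = x;
  ta_distr : forall x y z, meet x (bjoin meet compl y z)
                          = bjoin meet compl (meet x y) (meet x z);
  ta_bot : forall x y, bjoin meet compl x (meet y (compl y)) = x;
  ta_top : forall x y, meet x (bjoin meet compl y (compl y)) = x;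
  ta_s_meet : forall i j x y, i <> j -> s i j (meet x y) = meet (s i j x) (s i j y);
  ta_s_compl : forall i j x, i <> j -> s i j (compl x) = compl (s i j x);
  ta_words : forall w1 w2 : seq (I * I), word_ok w1 -> word_ok w2 ->
      (forall k, word_perm w1 k = word_perm w2 k) ->
      forall x, eval_word s w1 x = eval_word s w2 x
}.

Definition ble (A : Type) (meet : A -> A -> A) (x y : A) : Prop := meet x y = x.
Definition bzero_of (A : Type) (meet : A -> A -> A) (compl : A -> A) (x : A) : A :=
  meet x (compl x).

Definition is_atom (A : Type) (meet : A -> A -> A) (compl : A -> A) (a : A) : Prop :=
  a <> bzero_of meet compl a /\
  forall y, ble meet y a -> y = bzero_of meet compl a \/ y = a.

Definition is_atomic (A : Type) (meet : A -> A -> A) (compl : A -> A) : Prop :=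
  forall x, x <> bzero_of meet compl x ->
    exists a, is_atom meet compl a /\ ble meet a x.

Definition is_inf (A : Type) (meet : A -> A -> A) (Y : A -> Prop) (b : A) : Prop :=
  (forall y, Y y -> ble meet b y) /\
  (forall c, (forall y, Y y -> ble meet c y) -> ble meet c b).

Definition weak_space (I : eqType) (U : Type) (p : I -> U) (q : I -> U) : Prop :=
  exists l : seq I, forall i, q i <> p i -> i \in l.

Definition permutable (I : eqType) (U : Type) (V : (I -> U) -> Prop) : Prop :=
  forall q i j, i <> j -> V q -> V (fun k => q (transp i j k)).

(* f : A -> P(V) is an injective homomorphism into wp(V)
   (sets are predicates; set equalities are stated pointwise). *)
Definition is_rep_hom (I : eqType) (A : Type) (meet : A -> A -> A) (compl : A -> A)
    (s : I -> I -> A -> A) (U : Type) (V : (I -> U) -> Prop)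
    (f : A -> (I -> U) -> Prop) : Prop :=
  (forall x q, f x q -> V q) /\
  (forall x y q, f (meet x y) q <-> f x q /\ f y q) /\
  (forall x q, f (compl x) q <-> V q /\ ~ f x q) /\
  (forall i j x q, i <> j ->
      (f (s i j x) q <-> V q /\ f x (fun k => q (transp i j k)))) /\
  (forall x y, (forall q, f x q <-> f y q) -> x = y).

From Pilot Require Import Defs.
From mathcomp Require Import all_boot.
From Stdlib Require Import Classical.

Set Implicit Arguments.
Unset Strict Implicit.
Unset Printing Implicit Defensive.

(* The representation is built from an "atom labelling": a relation
   [labels q c] between sequences q and atoms c that is functional in q,
   hits every atom, and is equivariant (if q is labelled by c then
   q o [i,j] is labelled by s_ij c).  Sending x to the set of sequences whose
   label lies below x is then a complete embedding into wp(V), V being the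
   set of labelled sequences: every Boolean and s_ij clause reduces to a fact
   about atoms, and injectivity is atomicity.

   The concrete labelling lives over U = I * option A: to an atom a and a
   word w of transpositions with permutation pi we attach the sequence
   k |-> (pi k, Some a if pi k = i0 else None), labelled by s_{rev w} a.  Two
   such descriptions of the same sequence have the same permutation and the
   same atom, so the axiom identifying words with equal permutations makes
   the label well defined.  These sequences lie in the weak space of
   k |-> (k, None), since w moves only finitely many indices. *)

Lemma transpK (I : eqType) (i j : I) : involutive (transp i j).
Proof.
move=> k; rewrite /transp.
case: (eqVneq k i) => [->|neq_ki].
  by case: (eqVneq j i) => [->|neq_ji]; rewrite ?eqxx.
case: (eqVneq k j) => [->|neq_kj]; first by rewrite eqxx.
by rewrite (negbTE neq_ki) (negbTE neq_kj).
Qed.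

Lemma transp_id (I : eqType) (i j k : I) : k != i -> k != j -> transp i j k = k.
Proof. by rewrite /transp => /negbTE -> /negbTE ->. Qed.

Lemma word_perm_cat (I : eqType) (w v : seq (I * I)) (k : I) :
  word_perm (w ++ v) k = word_perm w (word_perm v k).
Proof. by rewrite /word_perm foldr_cat. Qed.

Lemma word_perm_revK (I : eqType) (w : seq (I * I)) :
  cancel (word_perm w) (word_perm (rev w)).
Proof.
elim: w => [|p w IH] k //=.
by rewrite rev_cons -cats1 word_perm_cat /= transpK IH.
Qed.

Lemma word_perm_K (I : eqType) (w : seq (I * I)) :
  cancel (word_perm (rev w)) (word_perm w).
Proof. by move=> k; rewrite -{1}(revK w) word_perm_revK. Qed.

Lemma word_ok_rev (I : eqType) (w : seq (I * I)) : word_ok w -> word_ok (rev w).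
Proof. by move=> ok_w p; rewrite mem_rev; apply: ok_w. Qed.

Lemma word_ok_cat (I : eqType) (w v : seq (I * I)) :
  word_ok w -> word_ok v -> word_ok (w ++ v).
Proof. by move=> ok_w ok_v p; rewrite mem_cat => /orP [/ok_w|/ok_v]. Qed.

Definition word_support (I : eqType) (w : seq (I * I)) : seq I :=
  flatten [seq [:: p.1; p.2] | p <- w].

Lemma word_perm_out (I : eqType) (w : seq (I * I)) (k : I) :
  k \notin word_support w -> word_perm w k = k.
Proof.
elim: w => [|p w IH] //=.
rewrite /word_support /= !inE !negb_or => /andP [nk1 /andP [nk2 nkw]].
by rewrite IH // transp_id.
Qed.

Section TransposAlgebra.

Variables (I : eqType) (A : Type) (meet : A -> A -> A) (compl : A -> A)
  (s : I -> I -> A -> A).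
Hypothesis TA : is_TA meet compl s.

Local Notation ble := (ble meet).
Local Notation is_atom := (is_atom meet compl).

Lemma meet_id (x : A) : meet x x = x.
Proof. by rewrite -{2}(ta_absorb2 TA x x) (ta_absorb1 TA). Qed.

Lemma zero_uniq (x y : A) : meet x (compl x) = meet y (compl y).
Proof. by rewrite -{1}(ta_bot TA (meet x (compl x)) y) (ta_joinC TA) (ta_bot TA). Qed.

Lemma meet_zero (x y : A) : meet x (meet y (compl y)) = meet y (compl y).
Proof. by rewrite (zero_uniq y x) (ta_meetA TA) meet_id. Qed.

Lemma ble_meet (c x y : A) : ble c (meet x y) <-> ble c x /\ ble c y.
Proof.
rewrite /Defs.ble; split=> [le_cxy|[le_cx le_cy]]; last by rewrite (ta_meetA TA) le_cx le_cy.
split; rewrite -le_cxy -(ta_meetA TA); last by rewrite -(ta_meetA TA x) meet_id.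
by rewrite (ta_meetC TA (meet x y)) (ta_meetA TA x x) meet_id.
Qed.

Lemma ble_trans (x y z : A) : ble x y -> ble y z -> ble x z.
Proof. by rewrite /Defs.ble => le_xy le_yz; rewrite -le_xy -(ta_meetA TA) le_yz. Qed.

Lemma ble_of_disjoint (x y : A) :
  meet x (compl y) = bzero_of meet compl (meet x (compl y)) -> ble x y.
Proof.
move=> zero_xy; rewrite /Defs.ble -{2}(ta_top TA x y) (ta_distr TA) zero_xy.
by rewrite /bzero_of (ta_bot TA).
Qed.

Lemma atom_ble_compl (c x : A) : is_atom c -> ble c (compl x) <-> ~ ble c x.
Proof.
move=> [c_neq0 c_min]; split=> [le_cx' le_cx|not_le_cx].
  have /ble_meet : ble c x /\ ble c (compl x) by [].
  rewrite /Defs.ble meet_zero => c_zero; apply: c_neq0.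
  by rewrite /bzero_of (zero_uniq c x).
have le_cxc : ble (meet c x) c.
  by rewrite /Defs.ble -(ta_meetA TA) (ta_meetC TA x c) (ta_meetA TA) meet_id.
case: (c_min _ le_cxc) => [cx_zero|cx_c]; last by rewrite /Defs.ble cx_c in not_le_cx.
rewrite /Defs.ble -{2}(ta_top TA c x) (ta_distr TA) cx_zero /bzero_of.
by rewrite (ta_joinC TA) (ta_bot TA).
Qed.

Lemma atomic_ext : is_atomic meet compl -> forall x y : A,
  (forall c, is_atom c -> ble c x <-> ble c y) -> x = y.
Proof.
move=> atomic.
suff atoms_ble x y : (forall c, is_atom c -> ble c x -> ble c y) -> ble x y.
  move=> x y same_atoms.
  have le_xy : ble x y by apply: atoms_ble => c /same_atoms [].
  have le_yx : ble y x by apply: atoms_ble => c /same_atoms [].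
  by rewrite -le_xy (ta_meetC TA) le_yx.
move=> atoms_xy; apply: ble_of_disjoint; apply: NNPP => /atomic [c [atom_c]].
case/ble_meet=> /(atoms_xy c atom_c) le_cy.
by move/(atom_ble_compl y atom_c).
Qed.

Lemma s_invol (i j : I) : i <> j -> involutive (s i j).
Proof.
move=> neq_ij x.
have ok_ijij : word_ok [:: (i, j); (i, j)] by move=> p; rewrite !inE orbb => /eqP ->.
apply: (ta_words TA ok_ijij (_ : word_ok [::])) => // k.
by rewrite /word_perm /= transpK.
Qed.

Lemma ble_s (i j : I) (c x : A) : i <> j -> ble c (s i j x) <-> ble (s i j c) x.
Proof.
move=> neq_ij; rewrite /Defs.ble.
split=> /(f_equal (s i j)); rewrite (ta_s_meet TA) // !(s_invol neq_ij) //.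
Qed.

Lemma s_atom (i j : I) (a : A) : i <> j -> is_atom a -> is_atom (s i j a).
Proof.
move=> neq_ij [a_neq0 a_min].
have s_zero b : s i j (bzero_of meet compl b) = bzero_of meet compl (s i j b).
  by rewrite /bzero_of (ta_s_meet TA) // (ta_s_compl TA).
split=> [sa_zero|y /(ble_s _ _ neq_ij) /a_min [y_zero|y_a]].
- by apply: a_neq0; rewrite -{1}[a](s_invol neq_ij) sa_zero s_zero s_invol.
- by left; rewrite -[y](s_invol neq_ij) y_zero s_zero.
- by right; rewrite -[y](s_invol neq_ij) y_a.
Qed.

Lemma eval_word_atom (w : seq (I * I)) (a : A) :
  word_ok w -> is_atom a -> is_atom (eval_word s w a).
Proof.
elim: w => [|p w IH] //= ok_pw atom_a.
apply: s_atom; first by apply: ok_pw; rewrite inE eqxx.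
by apply: IH atom_a => q w_q; apply: ok_pw; rewrite inE w_q orbT.
Qed.

Section AtomLabelling.

Variables (U : Type) (labels : (I -> U) -> A -> Prop).
Hypothesis labels_atom : forall q c, labels q c -> is_atom c.
Hypothesis labels_fun : forall q c c', labels q c -> labels q c' -> c = c'.
Hypothesis labels_transp : forall q c i j, i <> j -> labels q c ->
  labels (fun k => q (transp i j k)) (s i j c).
Hypothesis labels_onto : forall c, is_atom c -> exists q, labels q c.

Definition labelled (q : I -> U) : Prop := exists c, labels q c.

Definition label_rep (x : A) (q : I -> U) : Prop := exists2 c, labels q c & ble c x.

Lemma label_repE (q : I -> U) (c x : A) : labels q c -> label_rep x q <-> ble c x.
Proof.
by move=> q_c; split=> [[c' /(labels_fun q_c) ->]|le_cx] //; exists c.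
Qed.

Lemma labelled_permutable : permutable labelled.
Proof. by move=> q i j neq_ij [c /(labels_transp neq_ij) q_c]; exists (s i j c). Qed.

Lemma label_rep_meet (x y : A) (q : I -> U) :
  label_rep (meet x y) q <-> label_rep x q /\ label_rep y q.
Proof.
split=> [[c q_c /ble_meet [le_cx le_cy]]|[[c q_c le_cx] rep_y]]; first by split; exists c.
by exists c => //; apply/ble_meet; split=> //; apply/(label_repE _ q_c).
Qed.

Lemma label_rep_compl (x : A) (q : I -> U) :
  label_rep (compl x) q <-> labelled q /\ ~ label_rep x q.
Proof.
split=> [[c q_c le_cx']|[[c q_c] not_rep_x]].
  split; first by exists c.
  by rewrite (label_repE _ q_c); apply/(atom_ble_compl _ (labels_atom q_c)).
exists c => //; apply/(atom_ble_compl _ (labels_atom q_c)).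
by move/(label_repE _ q_c).
Qed.

Lemma label_rep_transp (i j : I) (x : A) (q : I -> U) : i <> j ->
  label_rep (s i j x) q <-> labelled q /\ label_rep x (fun k => q (transp i j k)).
Proof.
move=> neq_ij; split=> [[c q_c le_c_sx]|[[c q_c]]].
  split; first by exists c.
  by exists (s i j c); [exact: labels_transp | apply/ble_s].
by move/(label_repE _ (labels_transp neq_ij q_c))/(ble_s _ _ neq_ij); exists c.
Qed.

(* Injectivity: distinct elements are separated by an atom, i.e., a label. *)
Lemma label_rep_inj : is_atomic meet compl ->
  forall x y, (forall q, label_rep x q <-> label_rep y q) -> x = y.
Proof.
move=> atomic x y same_rep; apply: atomic_ext => // c /labels_onto [q q_c].
by rewrite -(label_repE x q_c) -(label_repE y q_c).
Qed.

Lemma label_rep_hom : is_atomic meet compl -> is_rep_hom meet compl s labelled label_rep.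
Proof.
move=> atomic; split; first by move=> x q [c q_c _]; exists c.
split; first exact: label_rep_meet.
split; first exact: label_rep_compl.
split; first exact: label_rep_transp.
exact: label_rep_inj.
Qed.

Lemma label_rep_inf (Y : A -> Prop) (b : A) : is_inf meet Y b ->
  forall q, label_rep b q <-> labelled q /\ (forall y, Y y -> label_rep y q).
Proof.
move=> [b_lower b_greatest] q.
split=> [[c q_c le_cb]|[[c q_c] rep_Y]]; first split; first by exists c.
  by move=> y Y_y; exists c => //; apply: ble_trans le_cb (b_lower y Y_y).
by exists c => //; apply: b_greatest => y /rep_Y; rewrite (label_repE _ q_c).
Qed.

Lemma labelled_atoms (q : I -> U) :
  labelled q <-> exists a, is_atom a /\ label_rep a q.
Proof.
split=> [[c q_c]|[a [_ [c q_c _]]]]; last by exists c.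
by exists c; split; [exact: labels_atom q_c | exists c; last exact: meet_id].
Qed.

End AtomLabelling.

Variable i0 : I.

Definition word_seq (a : A) (w : seq (I * I)) (k : I) : I * option A :=
  (word_perm w k, if word_perm w k == i0 then Some a else None).

Definition word_labels (q : I -> I * option A) (c : A) : Prop :=
  exists a w, [/\ word_ok w, is_atom a, q =1 word_seq a w & c = eval_word s (rev w) a].

Lemma word_labels_atom (q : I -> I * option A) (c : A) : word_labels q c -> is_atom c.
Proof.
by case=> a [w [ok_w atom_a _ ->]]; apply: eval_word_atom => //; apply: word_ok_rev.
Qed.

(* The sequence determines the permutation of the word and the atom. *)
Lemma word_labels_fun (q : I -> I * option A) (c c' : A) :
  word_labels q c -> word_labels q c' -> c = c'.
Proof.
move=> [a [w [ok_w _ q_aw ->]]] [a' [w' [ok_w' _ q_aw' ->]]].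
have seq_eq k : word_seq a w k = word_seq a' w' k by rewrite -q_aw -q_aw'.
have perm_eq k : word_perm w k = word_perm w' k by case: (seq_eq k).
have <- : a = a'.
  by move: (seq_eq (word_perm (rev w) i0)); rewrite /word_seq -perm_eq word_perm_K eqxx => -[].
apply: (ta_words TA (word_ok_rev ok_w) (word_ok_rev ok_w')) => k.
by rewrite -{1}(word_perm_K w' k) -perm_eq word_perm_revK.
Qed.

(* Composing with [i,j] appends (i,j) to the word. *)
Lemma word_labels_transp (q : I -> I * option A) (c : A) (i j : I) : i <> j ->
  word_labels q c -> word_labels (fun k => q (transp i j k)) (s i j c).
Proof.
move=> neq_ij [a [w [ok_w atom_a q_aw ->]]].
exists a, (w ++ [:: (i, j)]); split=> //.
- by apply: word_ok_cat ok_w _ => p; rewrite inE => /eqP ->.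
- by move=> k; rewrite q_aw /word_seq word_perm_cat.
- by rewrite rev_cat.
Qed.

Lemma word_labels_onto (c : A) : is_atom c -> exists q, word_labels q c.
Proof. by move=> atom_c; exists (word_seq c [::]), c, [::]. Qed.

(* Labelled sequences differ from k |-> (k, None) only on i0 and the support. *)
Lemma word_labelled_weak (q : I -> I * option A) :
  labelled word_labels q -> weak_space (fun k => (k, None)) q.
Proof.
move=> [_ [a [w [_ _ q_aw _]]]]; exists (i0 :: word_support w) => k.
rewrite inE q_aw /word_seq; case: (eqVneq k i0) => //= neq_k_i0.
by apply: contra_notT => /word_perm_out ->; rewrite (negbTE neq_k_i0).
Qed.

End TransposAlgebra.

Theorem theorem3p22 (I : eqType) (i0 i1 : I) (Hi : i0 <> i1)
  (A : Type) (meet : A -> A -> A) (compl : A -> A) (s : I -> I -> A -> A) :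
  is_TA meet compl s ->
  is_atomic meet compl ->
  exists (U : Type) (p : I -> U) (V : (I -> U) -> Prop) (f : A -> (I -> U) -> Prop),
    (forall q, V q -> weak_space p q) /\
    permutable V /\
    is_rep_hom meet compl s V f /\
    (forall (Y : A -> Prop) (b : A), is_inf meet Y b ->
       forall q, f b q <-> V q /\ (forall y, Y y -> f y q)) /\
    (forall q, V q <-> exists a, is_atom meet compl a /\ f a q).
Proof.
move=> TA atomic.
pose labels := word_labels meet compl s i0.
have lab_atom : forall q c, labels q c -> is_atom meet compl c.
  exact: word_labels_atom.
have lab_fun : forall q c c', labels q c -> labels q c' -> c = c'.
  exact: word_labels_fun.
have lab_transp : forall q c i j, i <> j -> labels q c ->
    labels (fun k => q (transp i j k)) (s i j c).
  exact: word_labels_transp.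
have lab_onto : forall c, is_atom meet compl c -> exists q, labels q c.
  exact: word_labels_onto.
exists (I * option A)%type, (fun k => (k, None)), (labelled labels), (label_rep meet labels).
split; first exact: word_labelled_weak.
split; first exact: (labelled_permutable lab_transp).
split; first exact: (label_rep_hom TA lab_atom lab_fun lab_transp lab_onto atomic).
split; first exact: (label_rep_inf TA lab_fun).
exact: (labelled_atoms TA lab_atom).
Qed.
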